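(* Let $X$ be a finite set with $|X|\ge 3$, let $T=(V,E)\in B(X)$, let $\mathcal T$ and $\mathcal T'$ be triplet covers of $T$, and let $x\in X$. Then: (P1) for every $v\in\mathring V$, $0\le\deg_{\mathcal T}(v)\le 3$, and $1\le\deg_{\mathcal T}(x)\le|X|-2$; (P2) if $\mathcal T'\subseteq\mathcal T$ then $E(\mathcal T)\subseteq E(\mathcal T')$; in particular, if $\deg_{\mathcal T'}(x)=1$ then $\deg_{\mathcal T}(x)=1$; (P3) if $\mathcal T$ is a minimal triplet cover for $T$, then for every $ab\in\mathcal T$ there is some $v\in\mathring V$ such that $a,v,b$ is a path in $G(\mathcal T)$; (P4) if $v$ is the vertex adjacent to $x$ in $T$, then $\{v,x\}\in E(\mathcal T)$; furthermore $\deg_{\mathcal T}(x)=1$ if and only if $\{v,x\}$ is the only edge of $G(\mathcal T)$ containing $x$; (P5) if $|X|\ge 4$, then $\deg_{\mathcal T}(x)=1$ if and only if $\mathcal T^{-x}$ is a triplet cover of $T-x$; (P6) if $\deg_{\mathcal T}(x)=1$ then $|\mathcal T|\ge|\mathcal T^{-x}|+2$.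
   Context: A binary phylogenetic $X$-tree is an unrooted tree $T=(V,E)$ whose leaf set is $X$ and all of whose non-leaf vertices are unlabelled of degree three; $B(X)$ is the set of such trees; $\mathring V$ is the set of interior vertices. Pairs in $\binom{X}{2}$ are written $ab$, triples $abc$. Given $\mathcal T\subseteq\binom{X}{2}$, a triple $abc$ supports $v\in\mathring V$ if $a,b,c$ lie one in each of the three connected components of $T$ with $v$ and its incident edges removed and $ab,ac,bc\in\mathcal T$; $S_v(\mathcal T)$ is the set of triples supporting $v$. $\mathcal T$ is a triplet cover for $T$ if $S_v(\mathcal T)\ne\emptyset$ for all $v\in\mathring V$; it is minimal if $\mathcal T-\{ab\}$ is not a triplet cover for $T$ for any $ab\in\mathcal T$. The support graph $G(\mathcal T)$ is the bipartite graph with vertex set $X\amalg\mathring V$ and edge set $E(\mathcal T)$, where $\{x,v\}\in E(\mathcal T)$ ($x\in X$, $v\in\mathring V$) iff $x\in A$ for all $A\in S_v(\mathcal T)$; $\deg_{\mathcal T}(p)$ denotes the degree of a vertex $p$ in $G(\mathcal T)$. For $x\in X$, $\mathcal T^{-x}$ is obtained from $\mathcal T$ by removing all pairs containing $x$. For $|X|\ge 4$, $T-x$ is the tree in $B(X-\{x\})$ obtained from $T$ by deleting leaf $x$ and its incident edge and suppressing the resulting degree-2 vertex. *)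

From mathcomp Require Import all_boot.
Set Implicit Arguments. Unset Strict Implicit. Unset Printing Implicit Defensive.

(* A phylogenetic tree is a
   vertex set W : {set V} together with an adjacency relation adj (only its
   restriction to W matters); the leaf set X : {set V} is a subset of W, i.e.
   leaves are identified with their labels.  Unordered pairs ab are the
   2-element sets [set a; b], triples abc the 3-element sets [set a; b; c]. *)

Section Phylo.
Variable V : finType.
Implicit Types (W X : {set V}) (adj : rel V) (P : {set {set V}}).

Definition rW W adj : rel V := fun p q => [&& p \in W, q \in W & adj p q].

Definition tdeg W adj v : nat := #|[set w in W | adj v w]|.

Definition is_tree W adj : Prop :=
  (forall u w, u \in W -> w \in W -> adj u w = adj w u) /\
  (forall u, u \in W -> ~~ adj u u) /\
  (forall u w, u \in W -> w \in W -> connect (rW W adj) u w) /\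
  (forall s : seq V, {subset s <= W} -> uniq s -> 3 <= size s ->
       ~~ cycle (rW W adj) s).

Definition binary_phylo W adj X : Prop :=
  is_tree W adj /\ X \subset W /\
  (forall v, v \in W -> tdeg W adj v = (if v \in X then 1 else 3)).

Definition interior W X : {set V} := W :\: X.

Definition separated W adj v a b : bool := ~~ connect (rW (W :\ v) adj) a b.

Definition supports W adj X P v (A : {set V}) : bool :=
  [exists a, exists b, exists c,
    [&& A == [set a; b; c], a \in X, b \in X, c \in X,
        separated W adj v a b, separated W adj v a c, separated W adj v b c,
        [set a; b] \in P, [set a; c] \in P & [set b; c] \in P]].

Definition Sv W adj X P v : {set {set V}} := [set A | supports W adj X P v A].

Definition pairs_on X P : bool := [forall A in P, (A \subset X) && (#|A| == 2)].

Definition triplet_cover W adj X P : Prop :=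
  pairs_on X P /\ (forall v, v \in interior W X -> Sv W adj X P v != set0).

Definition minimal_triplet_cover W adj X P : Prop :=
  triplet_cover W adj X P /\
  (forall A, A \in P -> ~ triplet_cover W adj X (P :\ A)).

Definition sg_edge W adj X P x v : bool :=
  [&& x \in X, v \in interior W X & [forall A in Sv W adj X P v, x \in A]].

(* E(P), edges {x,v} represented as ordered pairs (x, v) *)
Definition sg_edges W adj X P : {set V * V} :=
  [set e | sg_edge W adj X P e.1 e.2].

Definition degG W adj X P p : nat :=
  #|[set q | sg_edge W adj X P p q || sg_edge W adj X P q p]|.

Definition minus_pairs P x : {set {set V}} := [set A in P | x \notin A].

(* T - x : delete leaf x and its edge, suppress the resulting degree-2
   vertex u (the neighbour of x) by joining its two remaining neighbours *)
Definition leaf_nbr W adj x : V := odflt x [pick w in W | adj x w].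

Definition del_W W adj x : {set V} := W :\: [set x; leaf_nbr W adj x].

Definition del_adj W adj x : rel V := fun p q =>
  adj p q || [&& adj (leaf_nbr W adj x) p, adj (leaf_nbr W adj x) q & p != q].

End Phylo.

(* The leaf x has a unique neighbour u, which is interior as soon as |X| >= 3.
   Removing u isolates x and distributes the other leaves among the two other
   branches at u, so every triple supporting u contains x.  Hence {x, u} is an
   edge of G(T) for every cover T, which gives deg x >= 1 and (P4), and a
   triple supporting u yields two pairs of T through x, which gives (P6).
   Leaves other than x are separated by an interior vertex v <> u in T - x iff
   they are in T, so T^{-x} covers T - x iff every such v has a supporting
   triple avoiding x, i.e. iff {x, v} is not an edge: this is (P5).  The bound
   deg x <= |X| - 2 is the bound on the number of interior vertices that the
   handshake lemma gives, since a forest on n vertices has at most n - 1 edges.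
   (P2) is monotonicity of supporting triples in the set of pairs; for (P3),
   deleting a pair ab from a minimal cover leaves some vertex v unsupported,
   so every triple supporting v contains a and b. *)

From mathcomp Require Import all_boot zify.
Set Implicit Arguments. Unset Strict Implicit. Unset Printing Implicit Defensive.

Section RestrictedAdjacency.
Variables (V : finType) (adj : rel V).
Implicit Types (W : {set V}) (s : seq V).

Lemma rW_subset W W' : W' \subset W -> subrel (rW W' adj) (rW W adj).
Proof. by move=> /subsetP sW p q /and3P [pW qW pq]; rewrite /rW sW ?sW. Qed.

Lemma rW_path_subset W e s : e \in W -> path (rW W adj) e s -> {subset e :: s <= W}.
Proof.
elim: s e => [|y s IHs] e eW; first by move=> _ z; rewrite mem_seq1 => /eqP ->.
move=> /= /andP [/and3P [_ yW _] ys] z; rewrite in_cons => /orP [/eqP -> //|].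
exact: IHs.
Qed.

Lemma rW_sym W W' : (forall p q, p \in W -> q \in W -> adj p q = adj q p) ->
  W' \subset W -> symmetric (rW W' adj).
Proof.
move=> adjC /subsetP sW p q; rewrite /rW andbCA.
by case pW: (p \in W'); case qW: (q \in W'); rewrite //= adjC ?sW.
Qed.

Lemma connect_first_hit W u w s : path (rW W adj) w s -> u \in s -> w != u ->
  exists n, [/\ n \in W, adj n u & connect (rW (W :\ u) adj) w n].
Proof.
elim: s w => [//|y s IHs] w /= /andP [/and3P [wW yW w_y] y_path].
rewrite in_cons => u_ys w_u; have [y_u|y_u] := eqVneq y u.
  by exists w; split; rewrite // -y_u.
have u_s : u \in s by rewrite eq_sym (negbTE y_u) in u_ys.
have [n [nW n_u y_n]] := IHs y y_path u_s y_u.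
exists n; split=> //; apply: connect_trans y_n; apply: connect1.
by rewrite /rW !inE w_u y_u wW yW.
Qed.

End RestrictedAdjacency.

Lemma homo_connect (T : finType) (e e' : rel T) (f : T -> T) :
  (forall p q, e p q -> connect e' (f p) (f q)) ->
  forall a b, connect e a b -> connect e' (f a) (f b).
Proof.
move=> f_e a _ /connectP [s + ->]; elim: s a => [|y s IHs] a //= /andP [a_y y_s].
exact: connect_trans (f_e _ _ a_y) (IHs _ y_s).
Qed.

Section Forest.
Variables (V : finType) (adj : rel V).
Implicit Types (W : {set V}) (s : seq V).

(* [is_tree] without connectivity, so that it passes to vertex subsets. *)
Definition forest W : Prop :=
  [/\ forall u w, u \in W -> w \in W -> adj u w = adj w u,
      forall u, u \in W -> ~~ adj u u &
      forall s, {subset s <= W} -> uniq s -> 3 <= size s -> ~~ cycle (rW W adj) s].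

Lemma tree_forest W : is_tree W adj -> forest W.
Proof. by case=> adjC [adj_irr [_ acyc]]. Qed.

Lemma forest_subset W W' : W' \subset W -> forest W -> forest W'.
Proof.
move=> sW [adjC adj_irr acyc]; have sW' := subsetP sW.
split=> [u w uW wW|u uW|s s_W' s_uniq s_size]; first by rewrite adjC ?sW'.
  by rewrite adj_irr ?sW'.
apply: contra (acyc s (fun y ys => sW' _ (s_W' _ ys)) s_uniq s_size).
exact/sub_cycle/rW_subset.
Qed.

Lemma forest_path_nbr W e z p y : forest W ->
  path (rW W adj) e (z :: p) -> uniq [:: e, z & p] -> y \in p -> ~~ adj e y.
Proof.
case=> adjC _ acyc + + yp; case/splitPr: yp => p1 p2.
rewrite -cat_rcons -!cat_cons cat_path cat_uniq => /andP [s_path _] /andP [s_uniq _].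
have /andP [/and3P [eW _ _] _] := s_path.
have s_W := rW_path_subset eW s_path.
have yW : y \in W by apply: s_W; rewrite !inE mem_rcons mem_head !orbT.
apply: contraNN (acyc _ s_W s_uniq _) => [e_y|]; last by rewrite /= size_rcons.
have -> : cycle (rW W adj) [:: e, z & rcons p1 y] =
    path (rW W adj) e (z :: rcons p1 y) && rW W adj y e.
  by rewrite /= rcons_path last_rcons andbA.
by rewrite s_path /rW yW eW adjC.
Qed.

Lemma forest_path_extend W e p : forest W -> e \in W -> 1 < tdeg W adj e ->
  path (rW W adj) e p -> uniq (e :: p) ->
  exists2 y, path (rW W adj) y (e :: p) & uniq [:: y, e & p].
Proof.
move=> fW eW e_deg e_path e_uniq; have [adjC adj_irr _] := fW.
have : [set w in W | adj e w] :\ head e p != set0.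
  by move: e_deg; rewrite -card_gt0 /tdeg (cardsD1 (head e p)); lia.
case/set0Pn=> y; rewrite !inE => /and3P [y_head yW e_y].
have y_e : y != e by apply: contraTneq e_y => ->; exact: adj_irr.
have y_p : y \notin p.
  case: p y_head e_path e_uniq => [//|z p] /= y_z e_path e_uniq.
  rewrite in_cons negb_or y_z; apply: contraL e_y => y_p.
  exact: forest_path_nbr fW e_path e_uniq y_p.
exists y; first by rewrite /= e_path andbT /rW yW eW -adjC.
by rewrite /= in_cons negb_or y_e y_p.
Qed.

Lemma forest_leaf W : forest W -> W != set0 -> exists2 e, e \in W & tdeg W adj e <= 1.
Proof.
move=> fW /set0Pn [e0 e0W].
case: (boolP [exists e in W, tdeg W adj e <= 1]) => [/exists_inP //|/exists_inPn deg_gt1].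
(* Otherwise simple paths extend forever, eventually exceeding #|V| vertices. *)
have long_path k : exists e p,
    [/\ e \in W, size p = k, path (rW W adj) e p & uniq (e :: p)].
  elim: k => [|k [e [p [eW p_size e_path e_uniq]]]]; first by exists e0, [::].
  have [|y /[dup] /andP [/and3P [yW _ _] _] y_path y_uniq] :=
    forest_path_extend fW eW _ e_path e_uniq; first by rewrite ltnNge deg_gt1.
  by exists y, (e :: p); rewrite /= p_size.
have [e [p [_ p_size _ /card_uniqP /= e_card]]] := long_path #|V|.
by have := max_card (mem (e :: p)); rewrite e_card p_size ltnn.
Qed.

Lemma tdeg_setD1 W e w : e \in W -> tdeg W adj w = tdeg (W :\ e) adj w + adj w e.
Proof.
move=> eW; rewrite /tdeg (cardsD1 e) inE eW addnC; congr (_ + _).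
by apply: eq_card => z; rewrite !inE andbA.
Qed.

Lemma forest_nbrs_setD1 W e : forest W -> e \in W ->
  [set w in W | adj e w] \subset W :\ e.
Proof.
case=> _ adj_irr _ eW; apply/subsetP => w; rewrite !inE => /andP [wW e_w].
by rewrite wW andbT; apply: contraTneq e_w => ->; exact: adj_irr.
Qed.

Lemma sum_adj_forest W e : forest W -> e \in W ->
  \sum_(w in W :\ e) adj w e = tdeg W adj e.
Proof.
move=> fW eW; have [adjC _ _] := fW.
rewrite (eq_bigr (fun w => if w \in [set w in W | adj e w] then 1 else 0)) => [|w].
  rewrite -big_mkcondr sum1dep_card; apply: eq_card => w; rewrite in_set.
  exact/andb_idl/(subsetP (forest_nbrs_setD1 fW eW)).
by rewrite !inE => /andP [_ wW]; rewrite wW adjC.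
Qed.

Lemma sum_tdeg_forest W : forest W -> \sum_(w in W) tdeg W adj w <= (#|W|).*2 - 2.
Proof.
have [n] := ubnP #|W|; elim: n W => // n IHn W W_lt fW.
have [->|/(forest_leaf fW) [e eW e_deg]] := eqVneq W set0; first by rewrite big_set0.
have e_nbrs : tdeg W adj e <= #|W :\ e| := subset_leq_card (forest_nbrs_setD1 fW eW).
have W_card := cardsD1 e W; rewrite eW add1n in W_card.
have IH := IHn (W :\ e) (ltac:(lia)) (forest_subset (subD1set W e) fW).
rewrite (big_setD1 e eW) (eq_bigr (fun w => tdeg (W :\ e) adj w + adj w e)) => [|w _].
  rewrite big_split /= sum_adj_forest //; lia.
exact: tdeg_setD1.
Qed.

End Forest.

Lemma card_interior (V : finType) (W X : {set V}) (adj : rel V) :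
  binary_phylo W adj X -> #|interior W X| <= #|X| - 2.
Proof.
case=> /tree_forest fW [XW deg]; have := sum_tdeg_forest fW.
rewrite (big_setID X) /= (setIidPr XW) (eq_bigr (fun=> 1)) => [|w wX]; last first.
  by rewrite deg ?wX ?(subsetP XW).
rewrite [X in _ + X](eq_bigr (fun=> 3)) => [|w]; last first.
  by rewrite inE => /andP [/negbTE wX wW]; rewrite deg ?wX.
(* Handshake: #|X| + 3 #|interior W X| <= 2 (#|X| + #|interior W X|) - 2. *)
have := cardsID X W; rewrite (setIidPr XW) !sum_nat_const /interior; lia.
Qed.

Section SupportGraph.
Variables (V : finType) (W X : {set V}) (adj : rel V).
Implicit Types (P : {set {set V}}) (A B : {set V}).

Lemma SvP P v A :
  reflect (exists a b c, [/\ A = [set a; b; c], [/\ a \in X, b \in X & c \in X],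
     [/\ separated W adj v a b, separated W adj v a c & separated W adj v b c] &
     [/\ [set a; b] \in P, [set a; c] \in P & [set b; c] \in P]])
   (A \in Sv W adj X P v).
Proof.
rewrite inE; apply: (iffP existsP) => [[a /existsP [b /existsP [c]]]|].
  case/and5P=> /eqP -> aX bX cX /and4P [sab sac sbc /and3P [ab ac bc]].
  by exists a, b, c.
move=> [a [b [c [-> [aX bX cX] [sab sac sbc] [ab ac bc]]]]].
exists a; apply/existsP; exists b; apply/existsP; exists c.
by rewrite eqxx aX bX cX sab sac sbc ab ac bc.
Qed.

Lemma separated_neq v a b : separated W adj v a b -> a != b.
Proof. by apply: contra => /eqP ->; rewrite connect0. Qed.

Lemma Sv_subset P P' v : P' \subset P -> Sv W adj X P' v \subset Sv W adj X P v.
Proof.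
move=> /subsetP sP; apply/subsetP => A /SvP [a [b [c [-> abcX sep [ab ac bc]]]]].
by apply/SvP; exists a, b, c; split; rewrite ?sP.
Qed.

Lemma Sv_setD1 P B v A :
  ~~ (B \subset A) -> A \in Sv W adj X P v -> A \in Sv W adj X (P :\ B) v.
Proof.
move=> BA /SvP [a [b [c [A_abc abcX sep [ab ac bc]]]]].
have inPB p q : p \in A -> q \in A -> [set p; q] \in P -> [set p; q] \in P :\ B.
  move=> pA qA pqP; rewrite !inE pqP andbT; apply: contraNneq BA => <-.
  by apply/subsetP => z /set2P [] ->.
apply/SvP; exists a, b, c; split=> //; split; apply: inPB => //;
  by rewrite A_abc !inE eqxx ?orbT.
Qed.

Lemma sg_edge_subset P P' p q :
  P' \subset P -> sg_edge W adj X P p q -> sg_edge W adj X P' p q.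
Proof.
move=> /Sv_subset sP /and3P [pX qI /forall_inP p_in]; rewrite /sg_edge pX qI.
by apply/forall_inP => A /(subsetP (sP q)) /p_in.
Qed.

Lemma degG_leaf P x : x \in X ->
  degG W adj X P x = #|[set v | sg_edge W adj X P x v]|.
Proof.
move=> xX; apply: eq_card => v; rewrite !inE.
by case: (sg_edge _ _ _ _ x v) => //=; rewrite /sg_edge inE xX andbF.
Qed.

Lemma degG_interior_le3 P v : v \in interior W X -> Sv W adj X P v != set0 ->
  degG W adj X P v <= 3.
Proof.
move=> vI /set0Pn [A /[dup] AS /SvP [a [b [c [A_abc _ _ _]]]]].
apply: leq_trans (_ : #|A| <= 3); last first.
  have A_seq : A =i [:: a; b; c] by move=> z; rewrite A_abc !inE orbA.
  by rewrite (eq_card A_seq) card_size.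
apply/subset_leq_card/subsetP => q; rewrite inE.
case/orP=> [/and3P [] | /and3P [_ _ /forall_inP /(_ A AS) //]].
by move: vI; rewrite !inE => /andP [/negbTE ->].
Qed.

Lemma minimal_cover_pair_path P a b :
  minimal_triplet_cover W adj X P -> [set a; b] \in P ->
  exists v, v \in interior W X /\
    (a, v) \in sg_edges W adj X P /\ (b, v) \in sg_edges W adj X P.
Proof.
move=> [[P_pairs _] P_min] abP.
have /forall_inPn [v vI /negPn /eqP Sv0] :
    ~~ [forall v in interior W X, Sv W adj X (P :\ [set a; b]) v != set0].
  apply/negP => /forall_inP cover; apply: (P_min _ abP); split => //.
  by apply/forall_inP => A /setD1P [_ /(forall_inP P_pairs)].
have /andP [abX _] := forall_inP P_pairs _ abP.
have ab_in z : z \in [set a; b] -> sg_edge W adj X P z v.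
  move=> zab; rewrite /sg_edge vI (subsetP abX) //=; apply/forall_inP => A AS.
  apply: contraT => zA.
  have abA : ~~ ([set a; b] \subset A) by apply: contra zA => /subsetP; apply.
  by have := Sv_setD1 abA AS; rewrite Sv0 inE.
by exists v; split; last split; rewrite // inE; apply: ab_in; rewrite !inE eqxx ?orbT.
Qed.

Lemma card_minus_pairs_le P x y z :
  [set x; y] \in P -> [set x; z] \in P -> y != z -> x != z ->
  #|minus_pairs P x| + 2 <= #|P|.
Proof.
move=> xyP xzP yz xz.
have pairs_neq : [set x; y] != [set x; z].
  by apply/eqP => /setP /(_ z); rewrite !inE eqxx eq_sym (negbTE xz) eq_sym (negbTE yz).
have : [set [set x; y]; [set x; z]] \subset P :\: minus_pairs P x.
  by apply/subsetP => C /set2P [] ->; rewrite !inE ?xyP ?xzP eqxx.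
have MP : minus_pairs P x \subset P by apply/subsetP => C /setIdP [].
move/subset_leq_card; rewrite cards2 pairs_neq (cardsDS MP).
by have := subset_leq_card MP; lia.
Qed.

Lemma card_minus_pairs_support P v A x : A \in Sv W adj X P v -> x \in A ->
  #|minus_pairs P x| + 2 <= #|P|.
Proof.
case/SvP=> a [b [c [-> _ [/separated_neq ab /separated_neq ac /separated_neq bc]]]].
case=> abP acP bcP.
rewrite !inE -orbA => /or3P [] /eqP ->.
- exact: card_minus_pairs_le abP acP bc ac.
- by rewrite setUC in abP; exact: card_minus_pairs_le abP bcP ac bc.
- rewrite setUC in acP; rewrite setUC in bcP.
  by apply: card_minus_pairs_le acP bcP ab _; rewrite eq_sym.
Qed.

Lemma pairs_on_minus P x : pairs_on X P -> pairs_on (X :\ x) (minus_pairs P x).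
Proof.
move=> P_pairs; apply/forall_inP => A /setIdP [AP xA].
have /andP [AX ->] := forall_inP P_pairs A AP; rewrite andbT.
apply/subsetP => z zA; rewrite !inE (subsetP AX z zA) andbT.
by apply: contraNneq xA => <-.
Qed.

End SupportGraph.

Section LeafNeighbour.
Variables (V : finType) (W X : {set V}) (adj : rel V) (x : V).
Hypotheses (tree : binary_phylo W adj X) (X3 : 3 <= #|X|) (xX : x \in X).

Local Notation u := (leaf_nbr W adj x).

Let adjC p q : p \in W -> q \in W -> adj p q = adj q p.
Proof. by case: tree => [[adjC _] _]; apply: adjC. Qed.

Let adj_irr p : p \in W -> ~~ adj p p.
Proof. by case: tree => [[_ [irr _]] _]; apply: irr. Qed.

Let XW : X \subset W. Proof. by case: tree => [_ []]. Qed.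

Let xW : x \in W. Proof. exact: subsetP XW x xX. Qed.

Let connectW p q : p \in W -> q \in W -> connect (rW W adj) p q.
Proof. by case: tree => [[_ [_ [conn _]]] _]; apply: conn. Qed.

Let rW_connect_sym (W' : {set V}) : W' \subset W -> connect_sym (rW W' adj).
Proof. by move=> sW; apply/sym_connect_sym/(rW_sym adjC sW). Qed.

Let tdegE v : v \in W -> tdeg W adj v = (if v \in X then 1 else 3).
Proof. by case: tree => [_ [_ deg]]; apply: deg. Qed.

Lemma leaf_nbrsE : [set w in W | adj x w] = [set u].
Proof.
have /cards1P [u0 nbrsE] : tdeg W adj x == 1 by rewrite tdegE // ifT.
rewrite /leaf_nbr; case: pickP => [w w_nbr | no_nbr]; last first.
  by have := set11 u0; rewrite -nbrsE inE no_nbr.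
have : w \in [set w in W | adj x w] by rewrite inE.
by rewrite nbrsE => /set1P ->.
Qed.

Lemma leaf_nbrP v : v \in W -> adj x v -> v = u.
Proof. by move=> vW x_v; apply/set1P; rewrite -leaf_nbrsE inE vW. Qed.

Lemma leaf_nbrW : u \in W.
Proof. by have := set11 u; rewrite -leaf_nbrsE inE => /andP []. Qed.

Lemma leaf_adj_nbr : adj x u.
Proof. by have := set11 u; rewrite -leaf_nbrsE inE => /andP []. Qed.

Lemma leaf_nbr_notin_leaves : u \notin X.
Proof.
apply: contraTN X3 => uX; rewrite -leqNgt.
have u_nbrsE : [set w in W | adj u w] = [set x].
  have /cards1P [x0 nbrsE] : tdeg W adj u == 1 by rewrite tdegE ?leaf_nbrW ?uX.
  suff : x \in [set w in W | adj u w] by rewrite nbrsE => /set1P ->.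
  by rewrite inE xW -adjC ?leaf_nbrW ?leaf_adj_nbr.
have xu_closed : closed (rW W adj) [set x; u].
  apply: intro_closed => [|p q /and3P [_ qW p_q]].
    exact: rW_connect_sym.
  case/set2P=> p_eq; subst p; first by rewrite (leaf_nbrP qW p_q) set22.
  have : q \in [set w in W | adj u w] by rewrite inE qW.
  by rewrite u_nbrsE => /set1P ->; rewrite set21.
have /subset_leq_card : X \subset [set x; u].
  apply/subsetP => y yX; have yW := subsetP XW y yX.
  by rewrite -(closed_connect xu_closed (connectW xW yW)) set21.
by rewrite cards2 => /leq_trans; apply; case: (_ != _).
Qed.

Lemma leaf_nbr_interior : u \in interior W X.
Proof. by rewrite inE leaf_nbr_notin_leaves ?leaf_nbrW. Qed.

Lemma leaf_isolated w : connect (rW (W :\ u) adj) x w -> w = x.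
Proof.
have x_closed : closed (rW (W :\ u) adj) (pred1 x).
  apply: intro_closed => [|p q /and3P [_] /setD1P [q_u qW] p_q /eqP p_x].
    exact/rW_connect_sym/subsetDl.
  by subst p; rewrite (leaf_nbrP qW p_q) eqxx in q_u.
by move/(closed_connect x_closed); rewrite !inE eqxx => /esym /eqP.
Qed.

Lemma leaf_reaches_nbr l : l \in X -> l != x ->
  exists2 n, n \in [set w in W | adj u w] :\ x & connect (rW (W :\ u) adj) l n.
Proof.
move=> lX l_x; have lW := subsetP XW l lX.
have l_u : l != u by apply: contraTneq lX => ->; exact: leaf_nbr_notin_leaves.
have /connectP [p l_path u_last] := connectW lW leaf_nbrW.
have u_p : u \in p.
  by have := mem_last l p; rewrite -u_last in_cons eq_sym (negbTE l_u).
have [n [nW n_u l_n]] := connect_first_hit l_path u_p l_u.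
exists n; last by [].
rewrite !inE nW -adjC ?leaf_nbrW // n_u !andbT.
apply: (contraNneq _ l_x) => n_x; apply/eqP/leaf_isolated.
by move: l_n; rewrite n_x rW_connect_sym // subsetDl.
Qed.

Lemma leaf_nbr_other_nbrs : #|[set w in W | adj u w] :\ x| == 2.
Proof.
have := cardsD1 x [set w in W | adj u w].
rewrite -/(tdeg W adj u) tdegE ?leaf_nbrW // (negbTE leaf_nbr_notin_leaves).
by rewrite inE xW -adjC ?leaf_nbrW // leaf_adj_nbr => -[->].
Qed.

Lemma leaf_nbr_avoiding_nbr v : exists n, [/\ n \in W, adj u n, n != x & n != v].
Proof.
have /card_gt0P [n] : 0 < #|[set w in W | adj u w] :\ x :\ v|.
  have := cardsD1 v ([set w in W | adj u w] :\ x).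
  rewrite (eqP leaf_nbr_other_nbrs); lia.
by rewrite !inE => /and4P [n_v n_x nW u_n]; exists n.
Qed.

Lemma leaf_in_supports_nbr P A : A \in Sv W adj X P u -> x \in A.
Proof.
case/SvP=> a [b [c [-> [aX bX cX] [sab sac sbc] _]]].
apply: contraT; rewrite !inE !negb_or => /andP [/andP [x_a x_b] x_c].
(* Each of a, b, c reaches one of the two neighbours of u other than x in
   T - u, so two of them reach the same one and are not separated. *)
have /cards2P [n1 [n2 [_ nbrsE]]] := leaf_nbr_other_nbrs.
have reach l : l \in X -> x != l ->
    exists2 n, n \in [set n1; n2] & connect (rW (W :\ u) adj) l n.
  by move=> lX x_l; rewrite -nbrsE; apply: leaf_reaches_nbr; rewrite // eq_sym.
have [na /set2P na_eq a_na] := reach a aX x_a.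
have [nb /set2P nb_eq b_nb] := reach b bX x_b.
have [nc /set2P nc_eq c_nc] := reach c cX x_c.
have join l m n : connect (rW (W :\ u) adj) l n -> connect (rW (W :\ u) adj) m n ->
    connect (rW (W :\ u) adj) l m.
  by move=> l_n m_n; rewrite (connect_trans l_n) // rW_connect_sym ?subsetDl.
have : [|| na == nb, na == nc | nb == nc].
  by case: na_eq nb_eq nc_eq => -> [] -> [] ->; rewrite eqxx /= ?orbT.
case/or3P=> /eqP n_eq.
- by case/negP: sab; apply: join a_na _; rewrite n_eq.
- by case/negP: sac; apply: join a_na _; rewrite n_eq.
- by case/negP: sbc; apply: join b_nb _; rewrite n_eq.
Qed.

Lemma interior_del_leaf : interior (del_W W adj x) (X :\ x) = interior W X :\ u.
Proof.
apply/setP => v; rewrite !inE negb_or.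
by case: (eqVneq v x) => [->|]; rewrite ?xX ?andbF //= andbCA.
Qed.

Lemma connect_from_del_leaf v a b : v \in del_W W adj x ->
  connect (rW (del_W W adj x :\ v) (del_adj W adj x)) a b ->
  connect (rW (W :\ v) adj) a b.
Proof.
rewrite !inE negb_or => /andP [/andP [v_x v_u] vW].
have sub : del_W W adj x :\ v \subset W :\ v by apply/setSD/subsetDl.
apply: connect_sub => p q /[dup] pq_del /and3P [pD qD] /orP [p_q | /and3P [u_p u_q _]].
  by apply/connect1/(rW_subset sub); rewrite /rW pD qD.
have [pWv qWv] := (subsetP sub p pD, subsetP sub q qD).
have uWv : u \in W :\ v by rewrite !inE eq_sym v_u leaf_nbrW.
apply: (@connect_trans _ _ u); apply: connect1; rewrite /rW uWv ?pWv ?qWv //=.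
by rewrite adjC ?leaf_nbrW // (subsetP (subsetDl W [set v])).
Qed.

Lemma connect_to_del_leaf v a b : v \in del_W W adj x ->
  a \in X :\ x -> b \in X :\ x ->
  connect (rW (W :\ v) adj) a b ->
  connect (rW (del_W W adj x :\ v) (del_adj W adj x)) a b.
Proof.
move=> vD aX bX; set R := rW (del_W W adj x :\ v) (del_adj W adj x).
have inD z : z \in W :\ v -> z \notin [set x; u] -> z \in del_W W adj x :\ v.
  by rewrite !inE => /andP [-> ->] ->.
have [n [nW u_n n_x n_v]] := leaf_nbr_avoiding_nbr v.
have n_u : n != u by apply: contraTneq u_n => ->; rewrite adj_irr ?leaf_nbrW.
have nD : n \in del_W W adj x :\ v by rewrite inD ?inE ?n_v ?nW // negb_or n_x.
have to_n z : z \in W :\ v -> z \notin [set x; u] -> adj u z ->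
    connect R z n /\ connect R n z.
  move=> zWv zxu u_z; have zD := inD z zWv zxu.
  have [<-|z_n] := eqVneq z n; first by split; apply: connect0.
  by split; apply: connect1; rewrite /R /rW zD nD /del_adj u_z u_n ?z_n 1?eq_sym ?z_n !orbT.
have off_xu z : z \in X :\ x -> z \notin [set x; u].
  rewrite !inE negb_or => /andP [-> zX] /=.
  by apply: contraTneq zX => ->; exact: leaf_nbr_notin_leaves.
(* Collapsing x and u onto n maps every edge of T - v to a path of (T - x) - v. *)
set f := fun z => if z \in [set x; u] then n else z.
have [fa fb] : f a = a /\ f b = b by rewrite /f (negbTE (off_xu a aX)) (negbTE (off_xu b bX)).
move=> ab; rewrite -fa -fb; apply: (homo_connect _ ab) => p q /and3P [pWv qWv p_q].
have [pW qW] : p \in W /\ q \in W.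
  by move: pWv qWv; rewrite !inE => /andP [_ ->] /andP [_ ->].
rewrite /f; case: ifP => pxu; case: ifP => qxu.
- exact: connect0.
- case/set2P: pxu => p_eq; subst p; last exact: (to_n q qWv (negbT qxu) p_q).2.
  by rewrite (leaf_nbrP qW p_q) set22 in qxu.
- rewrite adjC // in p_q; case/set2P: qxu => q_eq; subst q.
    by rewrite (leaf_nbrP pW p_q) set22 in pxu.
  exact: (to_n p pWv (negbT pxu) p_q).1.
- by apply: connect1; rewrite /R /rW !inD ?pxu ?qxu // /del_adj p_q.
Qed.

Lemma separated_del_leaf v a b : v \in del_W W adj x ->
  a \in X :\ x -> b \in X :\ x ->
  separated (del_W W adj x) (del_adj W adj x) v a b = separated W adj v a b.
Proof.
move=> vD aX bX; congr negb; apply/idP/idP.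
  exact: connect_from_del_leaf.
exact: connect_to_del_leaf.
Qed.

Lemma Sv_del_leaf P v A : v \in del_W W adj x ->
  (A \in Sv (del_W W adj x) (del_adj W adj x) (X :\ x) (minus_pairs P x) v) =
  (A \in Sv W adj X P v) && (x \notin A).
Proof.
move=> vD; have pairE p q : [set p; q] \in minus_pairs P x =
    [&& [set p; q] \in P, x != p & x != q] by rewrite !inE negb_or.
apply/idP/idP => [/SvP [a [b [c [-> [aX bX cX] [sab sac sbc] [ab ac bc]]]]]|].
  rewrite !separated_del_leaf // in sab sac sbc; rewrite !pairE in ab ac bc.
  case/and3P: ab => ab x_a x_b; case/and3P: ac => ac _ x_c; case/and3P: bc => bc _ _.
  move: aX bX cX => /setD1P [_ aX] /setD1P [_ bX] /setD1P [_ cX].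
  apply/andP; split; first by apply/SvP; exists a, b, c.
  by rewrite !inE !negb_or x_a x_b x_c.
case/andP=> /SvP [a [b [c [-> [aX bX cX] [sab sac sbc] [ab ac bc]]]]] xA.
have [x_a x_b x_c] : [/\ x != a, x != b & x != c].
  by move: xA; rewrite !inE !negb_or => /andP [/andP [-> ->] ->].
have [aX' bX' cX'] : [/\ a \in X :\ x, b \in X :\ x & c \in X :\ x].
  by rewrite !inE eq_sym x_a aX eq_sym x_b bX eq_sym x_c cX.
apply/SvP; exists a, b, c.
by split; rewrite ?separated_del_leaf ?pairE ?ab ?ac ?bc ?x_a ?x_b ?x_c.
Qed.

Lemma sg_edge_leaf_nbr P : sg_edge W adj X P x u.
Proof.
rewrite /sg_edge xX leaf_nbr_interior.
by apply/forall_inP => A; exact: leaf_in_supports_nbr.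
Qed.

Lemma degG_leaf_gt0 P : 0 < degG W adj X P x.
Proof.
rewrite degG_leaf // card_gt0; apply/set0Pn.
by exists u; rewrite inE sg_edge_leaf_nbr.
Qed.

Lemma degG_leaf_le P : degG W adj X P x <= #|X| - 2.
Proof.
rewrite degG_leaf //; apply: leq_trans (card_interior tree).
by apply/subset_leq_card/subsetP => v; rewrite inE => /and3P [].
Qed.

Lemma degG_leaf_eq1 P :
  degG W adj X P x = 1 <-> forall v, sg_edge W adj X P x v -> v = u.
Proof.
rewrite degG_leaf //; split=> [/eqP /cards1P [w edgesE] v x_v | only_u].
  have /set1P -> : v \in [set w] by rewrite -edgesE inE.
  by have /set1P -> : u \in [set w] by rewrite -edgesE inE sg_edge_leaf_nbr.
apply/eqP/cards1P; exists u; apply/setP => v; rewrite !inE.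
by apply/idP/eqP => [/only_u | ->] //; exact: sg_edge_leaf_nbr.
Qed.

Lemma degG_leaf_eq1_edges P v : v \in W -> adj x v ->
  (x, v) \in sg_edges W adj X P /\
  (degG W adj X P x = 1 <->
     forall e, e \in sg_edges W adj X P -> x \in [set e.1; e.2] -> e = (x, v)).
Proof.
move=> vW x_v; rewrite (leaf_nbrP vW x_v) degG_leaf_eq1 //.
split; first by rewrite inE sg_edge_leaf_nbr.
split=> [only_u [p q] | edges_u w x_w].
  rewrite inE /= !inE => pq /orP [] /eqP x_eq; rewrite -x_eq in pq *.
    by rewrite (only_u _ pq).
  by move: pq; rewrite /sg_edge inE xX andbF.
have := edges_u (x, w); rewrite inE /= x_w set21.
by move=> /(_ isT isT) [].
Qed.

Lemma Sv_del_leaf_neq0 P v : v \in interior W X :\ u ->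
  (Sv (del_W W adj x) (del_adj W adj x) (X :\ x) (minus_pairs P x) v != set0) =
  ~~ sg_edge W adj X P x v.
Proof.
move=> vI; have /setDP [vD _] : v \in interior (del_W W adj x) (X :\ x).
  by rewrite interior_del_leaf.
rewrite /sg_edge xX (setD1P vI).2 /= negb_forall_in.
apply/set0Pn/exists_inP => [[A] | [A AS xA]].
  by rewrite Sv_del_leaf // => /andP [AS xA]; exists A.
by exists A; rewrite Sv_del_leaf // AS xA.
Qed.

Lemma degG_leaf_eq1_del_cover P : triplet_cover W adj X P ->
  degG W adj X P x = 1 <->
  triplet_cover (del_W W adj x) (del_adj W adj x) (X :\ x) (minus_pairs P x).
Proof.
case=> P_pairs _; rewrite degG_leaf_eq1 // /triplet_cover interior_del_leaf.
split=> [only_u | [_ cover] v x_v].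
  split=> [|v vI]; first exact: pairs_on_minus.
  rewrite Sv_del_leaf_neq0 //; apply/negP => /only_u v_u.
  by rewrite v_u setD11 in vI.
have [//|v_u] := eqVneq v u.
have vI : v \in interior W X :\ u by rewrite in_setD1 v_u; case/and3P: x_v.
by have := cover v vI; rewrite Sv_del_leaf_neq0 // x_v.
Qed.

Lemma card_minus_pairs_leaf P : triplet_cover W adj X P ->
  #|minus_pairs P x| + 2 <= #|P|.
Proof.
case=> _ cover; have /set0Pn [A AS] := cover u leaf_nbr_interior.
exact: card_minus_pairs_support AS (leaf_in_supports_nbr AS).
Qed.

End LeafNeighbour.

Theorem proposition1 (V : finType) (W X : {set V}) (adj : rel V)
    (T T' : {set {set V}}) (x : V) :
  3 <= #|X| ->
  binary_phylo W adj X ->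
  triplet_cover W adj X T ->
  triplet_cover W adj X T' ->
  x \in X ->
  (* (P1) *)
  ((forall v, v \in interior W X -> 0 <= degG W adj X T v <= 3) /\
   1 <= degG W adj X T x <= #|X| - 2) /\
  (* (P2) *)
  (T' \subset T ->
     sg_edges W adj X T \subset sg_edges W adj X T' /\
     (degG W adj X T' x = 1 -> degG W adj X T x = 1)) /\
  (* (P3) *)
  (minimal_triplet_cover W adj X T ->
     forall a b, [set a; b] \in T ->
       exists v, v \in interior W X /\
         (a, v) \in sg_edges W adj X T /\ (b, v) \in sg_edges W adj X T) /\
  (* (P4) *)
  (forall v, v \in W -> adj x v ->
     (x, v) \in sg_edges W adj X T /\
     (degG W adj X T x = 1 <->
        forall e, e \in sg_edges W adj X T -> x \in [set e.1; e.2] -> e = (x, v))) /\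
  (* (P5) *)
  (4 <= #|X| ->
     (degG W adj X T x = 1 <->
        triplet_cover (del_W W adj x) (del_adj W adj x) (X :\ x)
                      (minus_pairs T x))) /\
  (* (P6) *)
  (degG W adj X T x = 1 -> #|T| >= #|minus_pairs T x| + 2).
Proof.
move=> X3 tree cover _ xX; have [_ P_cover] := cover.
split; first split.
- by move=> v vI; rewrite degG_interior_le3 ?P_cover.
- by rewrite degG_leaf_gt0 ?degG_leaf_le.
split.
  move=> sub; have sub_edges p q : sg_edge W adj X T p q -> sg_edge W adj X T' p q.
    exact: sg_edge_subset.
  split; first by apply/subsetP => e; rewrite !inE; exact: sub_edges.
  by rewrite !degG_leaf_eq1 // => only_u v /sub_edges; exact: only_u.
split; first by move=> minimal a b; exact: minimal_cover_pair_path.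
split; first by move=> v; exact: degG_leaf_eq1_edges.
split; first by move=> _; exact: degG_leaf_eq1_del_cover.
move=> _; exact: card_minus_pairs_leaf tree X3 xX T cover.
Qed.
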